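(* Let $X$ be a Banach space and $J\subset X$ a closed subspace such that $(X,J)$ has the CQLP, and let $\pi:X\to X/J$ be the quotient map. Let $(x_n)_{n\ge1}\subset X$ be such that $(\pi(x_n))_{n\ge1}$ is a relatively compact sequence in $X/J$. Then there is a relatively compact sequence $(z_n)_{n\ge1}\subset X$ with $\pi(z_n)=\pi(x_n)$ for all $n$ and $\sup_n\|z_n\|=\sup_n\|\pi(x_n)\|$.
   Context: The pair $(X,J)$ has the compact quotient lifting property (CQLP) if for every Banach space $Z$ and every compact linear operator $T:Z\to X/J$ there is a compact linear operator $S:Z\to X$ with $\pi\circ S=T$ and $\|S\|=\|T\|$. *)

From HB Require Import structures.
From mathcomp Require Import all_boot all_order all_algebra.
From mathcomp Require Import all_classical all_reals all_analysis.
Set Implicit Arguments. Unset Strict Implicit. Unset Printing Implicit Defensive.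
Import Order.TTheory GRing.Theory Num.Theory.
Import numFieldNormedType.Exports.
Local Open Scope classical_set_scope.
Local Open Scope ring_scope.

Definition rel_compact (T : topologicalType) (A : set T) : Prop :=
  compact (closure A).

Definition is_subspace (R : realType) (X : normedModType R) (J : set X) : Prop :=
  J 0 /\ (forall a b, J a -> J b -> J (a + b)) /\ (forall (k : R) a, J a -> J (k *: a)).

Definition opnorm (R : realType) (Z Y : normedModType R) (T : Z -> Y) : \bar R :=
  ereal_sup [set (`|T z|)%:E | z in closed_ball (0 : Z) 1].

Definition compact_op (R : realType) (Z Y : normedModType R) (T : Z -> Y) : Prop :=
  rel_compact (T @` closed_ball (0 : Z) 1).

(* pi : X -> Q is (a realization of) the quotient map X -> X/J: a surjective
   linear map with kernel J such that Q carries the quotient norm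
   ||pi x|| = inf_{j in J} ||x - j||.  This determines (Q, pi) up to
   isometric isomorphism as X/J with its canonical projection. *)
Definition is_quotient_map (R : realType) (X Q : normedModType R)
    (J : set X) (pi : {linear X -> Q}) : Prop :=
  (forall q : Q, exists x : X, pi x = q) /\
  (forall x : X, pi x = 0 <-> J x) /\
  (forall x : X, (`|pi x|)%:E = ereal_inf [set (`|x - j|)%:E | j in J]).

Definition CQLP (R : realType) (X Q : normedModType R) (pi : {linear X -> Q}) : Prop :=
  forall (Z : completeNormedModType R) (T : {linear Z -> Q}),
    compact_op T ->
    exists S : {linear Z -> X},
      compact_op S /\ (forall z : Z, pi (S z) = T z) /\ opnorm S = opnorm T.

(* Put q n := pi (x n).  Since (q n) is bounded, a |-> \sum_n a n *: q n is an
   operator T from l^1 to X/J with ||T|| <= sup_n ||q n|| and T e_n = q n.  It is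
   compact because (q n) is relatively compact: replacing each q n by a point of a
   finite e-net moves T a by at most e ||a||, and lands in the image of a ball of a
   finite-dimensional space.  The CQLP lifts T to a compact S with ||S|| = ||T||, and
   z n := S e_n does the job: the z n lie in the relatively compact S(ball),
   pi (z n) = q n, and ||q n|| <= ||z n|| <= ||S|| <= sup_n ||q n||. *)

From HB Require Import structures.
From mathcomp Require Import all_boot all_order all_algebra.
From mathcomp Require Import all_classical all_reals all_analysis.
Set Implicit Arguments. Unset Strict Implicit. Unset Printing Implicit Defensive.
Import Order.TTheory GRing.Theory Num.Theory.
Import numFieldNormedType.Exports.
Local Open Scope classical_set_scope.
Local Open Scope ring_scope.

Lemma closed_unit_ballE {R : realType} {V : normedModType R} (z : V) :
  closed_ball 0 1 z = (`|z| <= 1).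
Proof. by rewrite closed_ballE // /closed_ball_ /= sub0r normrN. Qed.

Lemma cauchy_near_dist {R : realType} {V : normedModType R} (F : set_system V) :
  Filter F -> cauchy F ->
  forall e, 0 < e -> \forall a \near F, \forall b \near F, `|a - b| < e.
Proof.
move=> FF /cauchy_ballP Fc e e0.
have [[A B] /= [FA FB] AB] := Fc e e0.
apply: filterS FA => a Aa; apply: filterS FB => b Bb.
by have := AB (a, b) (conj Aa Bb); rewrite -ball_normE.
Qed.

Section ell1.
Context {R : realType}.
Implicit Types (a b : nat -> R) (N : nat).

Definition abs_psum a N : R := \sum_(n < N) `|a n|.

Definition abs_summable : {pred nat -> R} :=
  fun a => `[< exists M, forall N, abs_psum a N <= M >].

Lemma abs_psum_ge0 a N : 0 <= abs_psum a N.
Proof. exact: sumr_ge0. Qed.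

Lemma abs_psumD_le a b N : abs_psum (a + b) N <= abs_psum a N + abs_psum b N.
Proof. by rewrite /abs_psum -big_split; apply: ler_sum => i _; exact: ler_normD. Qed.

Lemma abs_psumZ (k : R) a N : abs_psum (k *: a) N = `|k| * abs_psum a N.
Proof. by rewrite /abs_psum mulr_sumr; apply: eq_bigr => i _; rewrite normrZ. Qed.

Lemma abs_summable_submod_closed : submod_closed abs_summable.
Proof.
split.
  by apply/asboolP; exists 0 => N; rewrite /abs_psum big1 // => i _; rewrite normr0.
move=> k a b /asboolP[Ma Ha] /asboolP[Mb Hb]; apply/asboolP.
exists (`|k| * Ma + Mb) => N; apply: le_trans (abs_psumD_le _ _ _) _.
by rewrite abs_psumZ lerD // ler_wpM2l.
Qed.

HB.instance Definition _ := GRing.isSubmodClosed.Build R (nat -> R) abs_summable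
  abs_summable_submod_closed.

Record ell1 := Ell1 { ell1_seq :> nat -> R; _ : ell1_seq \in abs_summable }.

HB.instance Definition _ := [isSub for ell1_seq].
HB.instance Definition _ := [Choice of ell1 by <:].
HB.instance Definition _ := [SubChoice_isSubZmodule of ell1 by <:].
HB.instance Definition _ := [SubZmodule_isSubLmodule of ell1 by <:].

Lemma ell1_summable (a : ell1) : exists M, forall N, abs_psum a N <= M.
Proof. by case: a => a /= /asboolP. Qed.

Definition ell1_norm (a : ell1) : R := sup (range (abs_psum a)).

Lemma abs_psum_le_ell1_norm (a : ell1) N : abs_psum a N <= ell1_norm a.
Proof.
apply: ub_le_sup; last by exists N.
by have [M HM] := ell1_summable a; exists M => _ [K _ <-].
Qed.

Lemma ell1_norm_le (a : ell1) M : (forall N, abs_psum a N <= M) -> ell1_norm a <= M.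
Proof. by move=> aM; apply: ge_sup => [|_ [N _ <-]]; [exists (abs_psum a 0), 0|]. Qed.

Lemma ell1_norm_ge0 (a : ell1) : 0 <= ell1_norm a.
Proof. exact: le_trans (abs_psum_ge0 _ 0) (abs_psum_le_ell1_norm _ 0). Qed.

Lemma ell1_normD (a b : ell1) : ell1_norm (a + b) <= ell1_norm a + ell1_norm b.
Proof.
apply: ell1_norm_le => N; apply: le_trans (abs_psumD_le _ _ _) _.
by rewrite lerD ?abs_psum_le_ell1_norm.
Qed.

Lemma ell1_normZ (k : R) (a : ell1) : ell1_norm (k *: a) = `|k| * ell1_norm a.
Proof.
have psumZ N : abs_psum (k *: a) N = `|k| * abs_psum a N by rewrite -abs_psumZ.
apply/eqP; rewrite eq_le; apply/andP; split.
  by apply: ell1_norm_le => N; rewrite psumZ ler_wpM2l ?abs_psum_le_ell1_norm.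
have [->|k0] := eqVneq k 0; first by rewrite normr0 mul0r ell1_norm_ge0.
rewrite -ler_pdivlMl ?normr_gt0 //; apply: ell1_norm_le => N.
by rewrite ler_pdivlMl ?normr_gt0 // -psumZ abs_psum_le_ell1_norm.
Qed.

Lemma abs_psum_ge_normr (a : nat -> R) n : `|a n| <= abs_psum a n.+1.
Proof. by rewrite /abs_psum big_ord_recr /= lerDr abs_psum_ge0. Qed.

Lemma ell1_norm_eq0 (a : ell1) : ell1_norm a = 0 -> a = 0.
Proof.
move=> a0; apply/val_inj/funext => n; apply/normr0_eq0/le_anti.
by rewrite normr_ge0 andbT -a0 (le_trans (abs_psum_ge_normr _ _)) ?abs_psum_le_ell1_norm.
Qed.

HB.instance Definition _ :=
  Lmodule_isNormed.Build R ell1 ell1_normD ell1_normZ ell1_norm_eq0.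

Lemma abs_coord_le_normr (a : ell1) n : `|a n| <= `|a|.
Proof. exact: le_trans (abs_psum_ge_normr _ _) (abs_psum_le_ell1_norm _ _). Qed.

Section ell1_complete.
Variable F : set_system ell1.
Hypotheses (FF : ProperFilter F) (Fc : cauchy F).

Let coord_cvg n : cvg ((fun a : ell1 => a n) @ F).
Proof.
apply: cauchy_cvg; apply: cauchy_exP => e e0.
have /filter_ex [a ae] := cauchy_near_dist FF Fc e0; exists (a n).
apply: filterS ae => b ab; rewrite /= -ball_normE /=.
by apply: le_lt_trans ab; exact: (abs_coord_le_normr (a - b) n).
Qed.

Let c n := lim ((fun a : ell1 => a n) @ F).

Let abs_psum_lim_sub_le (a : ell1) (r : R) N :
  (\forall b \near F, `|b - a| <= r) -> abs_psum (fun n => c n - a n) N <= r.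
Proof.
(* A partial sum only involves finitely many coordinates, so it passes to the limit. *)
move=> ar.
have psum_cvg : abs_psum (b - a) N @[b --> F] --> abs_psum (fun n => c n - a n) N.
  apply: cvg_big => [|n _]; first exact: add_continuous.
  by apply: cvg_norm; apply: cvgB; [exact: coord_cvg|exact: cvg_cst].
apply: cvgr_to_le psum_cvg _.
by apply: filterS ar => b; apply: le_trans; exact: abs_psum_le_ell1_norm.
Qed.

Let c_summable : c \in abs_summable.
Proof.
have /filter_ex [a a_near] := cauchy_near_dist FF Fc ltr01.
have ca N : abs_psum (fun n => c n - a n) N <= 1.
  by apply: abs_psum_lim_sub_le; apply: filterS a_near => b /ltW; rewrite distrC.
apply/asboolP; exists (`|a| + 1) => N.
have -> : abs_psum c N = abs_psum ((a : nat -> R) + (fun n => c n - a n)) N.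
  by apply: eq_bigr => n _; rewrite /= addrC subrK.
apply: le_trans (abs_psumD_le _ _ _) _.
by rewrite lerD ?ca //; exact: abs_psum_le_ell1_norm.
Qed.

Lemma ell1_cauchy_cvg : cvg F.
Proof.
apply: (cvgP (Ell1 c_summable)); apply/cvgrPdist_le => e e0.
apply: filterS (cauchy_near_dist FF Fc e0) => a ab.
apply: ell1_norm_le => N; apply: abs_psum_lim_sub_le.
by apply: filterS ab => b /ltW; rewrite distrC.
Qed.

End ell1_complete.

HB.instance Definition _ := Uniform_isComplete.Build ell1 ell1_cauchy_cvg.

Lemma abs_psum_indicator n N : abs_psum (fun k => (k == n)%:R) N = (n < N)%:R.
Proof.
elim: N => [|N IH]; first by rewrite /abs_psum big_ord0.
rewrite /abs_psum big_ord_recr /= -/(abs_psum (fun k => (k == n)%:R) N) IH.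
have -> : (n < N.+1)%N = (N == n) || (n < N)%N by rewrite ltnS leq_eqVlt eq_sym.
by case: eqP => [->|_]; rewrite ?ltnn ?normr1 ?normr0 ?add0r ?addr0.
Qed.

Lemma ell1_basis_summable n : (fun k => (k == n)%:R : R) \in abs_summable.
Proof. by apply/asboolP; exists 1 => N; rewrite abs_psum_indicator lern1 leq_b1. Qed.

Definition ell1_basis n : ell1 := Ell1 (ell1_basis_summable n).

Lemma normr_ell1_basis_le1 n : `|ell1_basis n| <= 1.
Proof. by apply: ell1_norm_le => N; rewrite abs_psum_indicator lern1 leq_b1. Qed.

End ell1.

Arguments ell1 : clear implicits.

Section ell1_op.
Context {R : realType} {V : completeNormedModType R}.

Record bounded_seq := BoundedSeq {
  bseq :> nat -> V;
  bseq_bound : R;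
  normr_bseq_le : forall n, `|bseq n| <= bseq_bound }.

Variable q : bounded_seq.

Lemma bseq_bound_ge0 : 0 <= bseq_bound q.
Proof. exact: le_trans (normr_ge0 _) (normr_bseq_le q 0). Qed.

Lemma normed_series_le (a : ell1 R) N :
  [normed series (fun n => a n *: q n)] N <= bseq_bound q * `|a|.
Proof.
apply: le_trans (ler_wpM2l bseq_bound_ge0 (abs_psum_le_ell1_norm a N)).
rewrite /= seriesEord /= mulr_sumr; apply: ler_sum => n _.
by rewrite normrZ mulrC ler_wpM2r ?normr_bseq_le.
Qed.

Lemma normed_series_cvg (a : ell1 R) : cvgn [normed series (fun n => a n *: q n)].
Proof.
apply: nondecreasing_is_cvgn.
  exact: (@nondecreasing_series _ (fun n => `|a n *: q n|) xpredT 0).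
by exists (bseq_bound q * `|a|) => _ [N _ <-]; exact: normed_series_le.
Qed.

Definition ell1_op (a : ell1 R) : V := limn (series (fun n => a n *: q n)).

Lemma series_ell1_op_cvg (a : ell1 R) : cvgn (series (fun n => a n *: q n)).
Proof. exact/normed_cvg/normed_series_cvg. Qed.

Lemma normr_ell1_op_le (a : ell1 R) : `|ell1_op a| <= bseq_bound q * `|a|.
Proof.
apply: le_trans (lim_series_norm (@normed_series_cvg a)) _.
by apply: limr_le; [exact: normed_series_cvg|near=> N; exact: normed_series_le].
Unshelve. all: by end_near.
Qed.

Lemma ell1_op_linear : linear ell1_op.
Proof.
move=> k a b; apply: cvg_lim => //.
have -> : series (fun n => (k *: a + b) n *: q n) =
    k *: series (fun n => a n *: q n) + series (fun n => b n *: q n).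
  apply/funext => N; rewrite !fctE !seriesEord /= scaler_sumr -big_split /=.
  by apply: eq_bigr => n _; rewrite scalerDl scalerA.
by apply: cvgD; [apply: cvgZ; [exact: cvg_cst|]|]; exact: series_ell1_op_cvg.
Qed.

Lemma ell1_op_basis n : ell1_op (ell1_basis n) = q n.
Proof.
apply: cvg_lim => //; apply: cvg_near_cst; near=> N.
have nN : (n < N)%N by near: N; exists n.+1.
rewrite seriesEord /= (bigD1 (Ordinal nN)) //= eqxx scale1r big1 ?addr0 // => i ni.
by rewrite (_ : _ == n = false) ?scale0r //; apply: contraNF ni => /eqP ni; apply/eqP/val_inj.
Unshelve. all: by end_near.
Qed.

End ell1_op.

Arguments bounded_seq : clear implicits.

HB.instance Definition _ (R : realType) (V : completeNormedModType R) (q : bounded_seq R V) :=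
  GRing.isLinear.Build R (ell1 R) V *:%R (ell1_op q) (ell1_op_linear q).

Section totally_bounded.
Context {R : realType}.

Definition totally_bounded {V : normedModType R} (A : set V) :=
  forall e, 0 < e -> exists s : seq V, forall y, A y -> exists2 x, x \in s & `|x - y| < e.

Lemma totally_bounded_subset {V : normedModType R} (A B : set V) :
  A `<=` B -> totally_bounded B -> totally_bounded A.
Proof. by move=> AB tbB e /tbB[s Bs]; exists s => y /AB/Bs. Qed.

Lemma compact_totally_bounded {V : normedModType R} (A : set V) :
  compact A -> totally_bounded A.
Proof.
rewrite compact_cover => cA e e0.
have [|D _ cover] := cA V A (ball ^~ e) (fun _ _ => ball_open _ _).
  by move=> y Ay; exists y => //; exact: ballxx.
exists (mathcomp.finmap.finmap.enum_fset D) => y /cover[x xD xy].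
by exists x => //; move: xy; rewrite -ball_normE.
Qed.

Lemma totally_bounded_approx {V : normedModType R} (A : set V) :
  (forall e, 0 < e -> exists2 B : set V, totally_bounded B &
     forall y, A y -> exists2 x, B x & `|x - y| < e) ->
  totally_bounded A.
Proof.
move=> approx e e0; have e20 : 0 < e / 2 by rewrite divr_gt0.
have [B /(_ _ e20)[s Bs] AB] := approx _ e20; exists s => y /AB[x /Bs[z zs zx] xy].
exists z => //; rewrite -(subrK x z) -addrA (splitr e).
by apply: le_lt_trans (ler_normD _ _) _; rewrite ltrD.
Qed.

Lemma ultra_exists_in_seq (T : Type) (F : set_system T) (I : eqType) (s : seq I)
    (P : I -> set T) : UltraFilter F ->
  F [set y | exists2 i, i \in s & P i y] -> exists2 i, i \in s & F (P i).
Proof.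
move=> UF; elim: s => [|i s IH] Fs; first by have [y [i]] := filter_ex Fs.
have [FPi|FnPi] := in_ultra_setVsetC (P i) UF; first by exists i; rewrite ?mem_head.
have [|j js FPj] := IH; last by exists j; rewrite // in_cons js orbT.
apply: filterS (filterI Fs FnPi) => y [[j]].
by rewrite in_cons => /orP[/eqP->|js] Pjy // nPiy; exists j.
Qed.

Lemma totally_bounded_closure {V : normedModType R} (A : set V) :
  totally_bounded A -> totally_bounded (closure A).
Proof.
move=> tbA e e0; have e20 : 0 < e / 2 by rewrite divr_gt0.
have [s As] := tbA _ e20; exists s => y /(_ (ball y (e / 2)) (nbhsx_ballx _ _ e20)).
move=> [z [Az yz]]; have [x xs xz] := As z Az; exists x => //.
move: yz; rewrite -ball_normE /= => yz; rewrite -(subrK z x) -addrA (splitr e).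
apply: le_lt_trans (ler_normD _ _) _; by rewrite ltrD // distrC.
Qed.

Lemma totally_bounded_compact_closure {V : completeNormedModType R} (A : set V) :
  totally_bounded A -> compact (closure A).
Proof.
move=> /totally_bounded_closure tbA; rewrite compact_ultra => F UF FA.
have F_cauchy : cauchy F.
  apply: cauchy_exP => e /tbA[s As].
  have [|x _ Fx] := @ultra_exists_in_seq _ _ _ s (ball ^~ e) UF; last by exists x.
  by apply: filterS FA => y /As[x xs xy]; exists x; rewrite // -ball_normE.
have F_cvg : cvg F by exact: cauchy_cvg.
exists (lim F); split => //.
exact: (@closed_cvg _ _ F _ id _ (@closed_closure _ A) FA _ F_cvg).
Qed.

End totally_bounded.

Section ell1_op_compact.
Context {R : realType} {V : completeNormedModType R}.

Lemma closed_ball_rV_compact m : compact (closed_ball (0 : 'rV[R]_m) 1).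
Proof.
apply: bounded_closed_compact; last exact: closed_ball_closed.
exists 1; split => // M M1 c; rewrite closed_unit_ballE.
by move/le_trans; apply; exact: ltW.
Qed.

Lemma totally_bounded_combinations m (p : 'I_m -> V) :
  totally_bounded [set \sum_(i < m) c 0 i *: p i | c in closed_ball (0 : 'rV[R]_m) 1].
Proof.
apply: compact_totally_bounded; apply: continuous_compact; last exact: closed_ball_rV_compact.
apply: continuous_subspaceT; apply: continuous_big => [|i _]; first exact: add_continuous.
by move=> c; apply: continuousZ; [exact: coord_continuous|exact: cst_continuous].
Qed.

Lemma regroup_scaled_sum m N (sigma : nat -> 'I_m) (a : nat -> R) (p : 'I_m -> V) :
  \sum_(i < m) (\sum_(n < N | sigma n == i) a n) *: p i = \sum_(n < N) a n *: p (sigma n).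
Proof.
rewrite [RHS](partition_big (fun n : 'I_N => sigma n) xpredT) //=.
by apply: eq_bigr => i _; rewrite scaler_suml; apply: eq_bigr => n /eqP ->.
Qed.

Lemma normr_regrouped_le m N (sigma : nat -> 'I_m) (a : nat -> R) :
  `|\row_(i < m) \sum_(n < N | sigma n == i) a n| <= abs_psum a N.
Proof.
rewrite [leLHS]mx_normrE; apply: bigmax_le => [|[i j] _]; first exact: abs_psum_ge0.
rewrite mxE (ord1 i); apply: le_trans (ler_norm_sum _ _ _) _.
by rewrite [leRHS](bigID (fun n : 'I_N => sigma n == j)) /= lerDl sumr_ge0.
Qed.

Lemma ell1_op_totally_bounded (q : bounded_seq R V) :
  rel_compact (range q) -> totally_bounded (ell1_op q @` closed_ball (0 : ell1 R) 1).
Proof.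
move=> q_rc; apply: totally_bounded_approx => e e0.
have e20 : 0 < e / 2 by rewrite divr_gt0.
have [s q_net] := totally_bounded_subset (@subset_closure _ _)
  (compact_totally_bounded q_rc) e20.
pose p (i : 'I_(size s)) := s`_i.
have near_net n : exists i : 'I_(size s), `|p i - q n| < e / 2.
  have [x xs xq] := q_net (q n) (ex_intro2 _ _ n I erefl).
  by exists (Ordinal (etrans (index_mem x s) xs)); rewrite /p nth_index.
(* Moving each q n to the net point p (sigma n) moves a partial sum of [ell1_op q a] by at most
   e/2 * ||a||, and the moved sum is a combination of the p i with coefficients of total mass
   at most ||a||. *)
pose sigma n := projT1 (cid (near_net n)).
exists [set \sum_(i < size s) c 0 i *: p i | c in closed_ball (0 : 'rV[R]_(size s)) 1];
  first exact: totally_bounded_combinations.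
move=> _ [a + <-]; rewrite closed_unit_ballE => a1.
have /cvgrPdist_lt/(_ _ e20)/filter_ex[N tail] := series_ell1_op_cvg (q := q) (a := a).
pose c := \row_(i < size s) \sum_(n < N | sigma n == i) a n.
exists (\sum_(i < size s) c 0 i *: p i).
  exists c => //; rewrite closed_unit_ballE.
  exact: le_trans (normr_regrouped_le _ _ _) (le_trans (abs_psum_le_ell1_norm _ _) a1).
have head : `|\sum_(i < size s) c 0 i *: p i - series (fun n => a n *: q n) N| <= e / 2.
  under eq_bigr do rewrite mxE.
  rewrite regroup_scaled_sum seriesEord /= -sumrB; apply: le_trans (ler_norm_sum _ _ _) _.
  apply: le_trans (_ : \sum_(n < N) `|a n| * (e / 2) <= _).
    apply: ler_sum => n _; rewrite -scalerBr normrZ ler_wpM2l //.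
    exact/ltW/(projT2 (cid (near_net n))).
  rewrite -mulr_suml ler_piMl //; first exact: ltW.
  exact: le_trans (abs_psum_le_ell1_norm _ _) a1.
rewrite -[X in `|X - _|](subrK (series (fun n => a n *: q n) N)) -addrA (splitr e).
by apply: le_lt_trans (ler_normD _ _) _; rewrite ler_ltD // distrC.
Qed.

Lemma ell1_op_compact (q : bounded_seq R V) :
  rel_compact (range q) -> compact_op (ell1_op q).
Proof. by move=> /ell1_op_totally_bounded; exact: totally_bounded_compact_closure. Qed.

End ell1_op_compact.

Section operator_norm.
Context {R : realType}.

Lemma normr_le_opnorm {Z Y : normedModType R} (T : Z -> Y) z :
  `|z| <= 1 -> ((`|T z|)%:E <= opnorm T)%E.
Proof. by move=> z1; apply: ereal_sup_ubound; exists z; rewrite ?closed_unit_ballE. Qed.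

Lemma opnorm_le {Z Y : normedModType R} (T : Z -> Y) (M : R) :
  0 <= M -> (forall z, `|T z| <= M * `|z|) -> (opnorm T <= M%:E)%E.
Proof.
move=> M0 TM; apply: ge_ereal_sup => _ [z + <-]; rewrite closed_unit_ballE lee_fin => z1.
by apply: le_trans (TM z) _; rewrite ler_piMr.
Qed.

End operator_norm.

Lemma normr_quotient_le {R : realType} {X Q : normedModType R} (J : set X)
    (pi : {linear X -> Q}) :
  J 0 -> is_quotient_map J pi -> forall x, `|pi x| <= `|x|.
Proof.
move=> J0 [_ [_ qnorm]] x; rewrite -lee_fin qnorm.
by apply: ereal_inf_lbound; exists 0; rewrite ?subr0.
Qed.

Lemma ereal_sup_range_squeeze {R : realType} (f g : nat -> \bar R) :
  (forall n, (f n <= g n)%E) -> (forall n, (g n <= ereal_sup (range f))%E) ->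
  ereal_sup (range g) = ereal_sup (range f).
Proof.
move=> fg gf; apply/le_anti/andP; split; first by apply: ge_ereal_sup => _ [n _ <-].
apply: ge_ereal_sup => _ [n _ <-]; apply: le_trans (fg n) _.
by apply: ereal_sup_ubound; exists n.
Qed.

Lemma rel_compact_range_bounded {R : realType} {V : normedModType R} (q : nat -> V) :
  rel_compact (range q) -> has_ubound (range (fun n => `|q n|)).
Proof.
move=> /compact_bounded[r [_ rM]]; have /rM qM : r < r + 1 by rewrite ltrDl.
by exists (r + 1) => _ [n _ <-]; apply: qM; apply: subset_closure; exists n.
Qed.

Theorem proposition3 (R : realType) (X Q : completeNormedModType R)
    (J : set X) (pi : {linear X -> Q}) :
  closed J -> is_subspace J -> is_quotient_map J pi -> CQLP pi ->
  forall x : nat -> X, rel_compact (range (fun n => pi (x n))) ->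
  exists z : nat -> X,
    rel_compact (range z) /\
    (forall n, pi (z n) = pi (x n)) /\
    ereal_sup (range (fun n => (`|z n|)%:E)) =
    ereal_sup (range (fun n => (`|pi (x n)|)%:E)).
Proof.
move=> _ [J0 _] quotient cqlp x q_rc.
pose M := sup (range (fun n => `|pi (x n)|)).
have q_ub := rel_compact_range_bounded q_rc.
pose q := BoundedSeq (fun n => ub_le_sup q_ub (ex_intro2 _ _ n I erefl) : `|pi (x n)| <= M).
have [S [S_compact [piS normS]]] :=
  cqlp (ell1 R) (ell1_op q) (@ell1_op_compact _ _ q q_rc).
have piz n : pi (S (ell1_basis n)) = pi (x n) by rewrite piS; exact: ell1_op_basis.
exists (fun n => S (ell1_basis n)); split; [|split => //].
- move: S_compact; rewrite /compact_op /rel_compact -!precompactE.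
  apply: precompact_subset => _ [n _ <-].
  by exists (ell1_basis n); rewrite ?closed_unit_ballE ?normr_ell1_basis_le1.
have supE : ereal_sup (range (fun n => (`|pi (x n)|)%:E)) = M%:E.
  by rewrite -ereal_sup_EFin ?image_comp //; exists `|pi (x 0)|, 0.
apply: ereal_sup_range_squeeze => n.
  by rewrite lee_fin -piz (normr_quotient_le J0 quotient).
rewrite supE; apply: le_trans (normr_le_opnorm _ (normr_ell1_basis_le1 n)) _.
by rewrite normS; apply: opnorm_le (bseq_bound_ge0 q) _ => a; exact: normr_ell1_op_le.
Qed.
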